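(* Let $\mathcal{W}$ be a weakly exact structure on an additive category $\mathcal{A}$. Let $I$ be the class of admissible monics of $\mathcal{W}$ and $\mathcal{D}$ the class of admissible epics of $\mathcal{W}$. Then $I$ is a right weakly exact structure and $\mathcal{D}$ is a left weakly exact structure on $\mathcal{A}$. Consequently every weakly exact structure arises from a pair (left weakly exact structure, right weakly exact structure) by taking all kernel-cokernel pairs $(i,d)$ with $i\in I$, $d\in\mathcal{D}$.
   Context: Let $\mathcal{A}$ be an additive category. A kernel-cokernel pair (short exact sequence) is a pair of composable morphisms $A\xrightarrow{i}B\xrightarrow{d}C$ with $i$ a kernel of $d$ and $d$ a cokernel of $i$. A weakly exact structure on $\mathcal{A}$ is a class $\mathcal{W}$ of kernel-cokernel pairs, closed under isomorphisms of sequences and under finite direct sums of sequences, such that, calling $i$ an admissible monic (resp. $d$ an admissible epic) if $(i,d)\in\mathcal{W}$ for some $d$ (resp. some $i$): (E0) $1_A$ is an admissible monic for every object $A$; (E0)$^{op}$ $1_A$ is an admissible epic for every object $A$; (E2) for every admissible monic $i:A\to B$ and every morphism $t:A\to C$ the pushout of $i$ along $t$ exists and the resulting morphism $C\to S$ is an admissible monic; (E2)$^{op}$ for every admissible epic $h:A\to C$ and every morphism $t:B\to C$ the pullback of $h$ along $t$ exists and the resulting morphism $P\to B$ is an admissible epic. A right weakly exact structure on $\mathcal{A}$ is a class $I$ of morphisms that are kernels, closed under isomorphisms (of arrows), such that: (Id) for every object $X$, $1_X\in I$ and $0\to X$ is in $I$; (P) for every $f:X\to Y$ in $I$ and every morphism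 $h:X\to X'$ the pushout of $f$ along $h$ exists and the resulting morphism $f':X'\to Y'$ lies in $I$; (Q) if $A\xrightarrow{a}B\xrightarrow{b}C$ with $ba\in I$ and $a$ has a cokernel, then $a\in I$; (S) $I$ is closed under direct sums of morphisms. A left weakly exact structure is a class $\mathcal{D}$ of morphisms that are cokernels, closed under isomorphisms, satisfying the dual conditions: (Id$^{op}$) $1_X\in\mathcal{D}$ and $X\to 0$ is in $\mathcal{D}$ for all $X$; (P$^{op}$) pullbacks of morphisms in $\mathcal{D}$ along arbitrary morphisms exist and yield morphisms in $\mathcal{D}$; (Q$^{op}$) if $ba\in\mathcal{D}$ and $b$ has a kernel then $b\in\mathcal{D}$; (S$^{op}$) $\mathcal{D}$ is closed under direct sums of morphisms. *)

Set Implicit Arguments.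
Unset Strict Implicit.

Reserved Notation "g ∘ f" (at level 40, left associativity).

Record AdditiveCategory := {
  Obj :> Type;
  Hom : Obj -> Obj -> Type;
  idm : forall A, Hom A A;
  comp : forall A B C, Hom B C -> Hom A B -> Hom A C;
  comp_assoc : forall A B C D (h : Hom C D) (g : Hom B C) (f : Hom A B),
      comp h (comp g f) = comp (comp h g) f;
  comp_id_l : forall A B (f : Hom A B), comp (idm B) f = f;
  comp_id_r : forall A B (f : Hom A B), comp f (idm A) = f;
  hadd : forall A B, Hom A B -> Hom A B -> Hom A B;
  hzero : forall A B, Hom A B;
  hneg : forall A B, Hom A B -> Hom A B;
  hadd_assoc : forall A B (f g h : Hom A B), hadd f (hadd g h) = hadd (hadd f g) h;
  hadd_comm : forall A B (f g : Hom A B), hadd f g = hadd g f;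
  hadd_0 : forall A B (f : Hom A B), hadd f (hzero A B) = f;
  hadd_neg : forall A B (f : Hom A B), hadd f (hneg f) = hzero A B;
  comp_add_l : forall A B C (g g' : Hom B C) (f : Hom A B),
      comp (hadd g g') f = hadd (comp g f) (comp g' f);
  comp_add_r : forall A B C (g : Hom B C) (f f' : Hom A B),
      comp g (hadd f f') = hadd (comp g f) (comp g f');
  zobj : Obj;
  zobj_id : idm zobj = hzero zobj zobj;
  bsum : Obj -> Obj -> Obj;
  bin1 : forall A B, Hom A (bsum A B);
  bin2 : forall A B, Hom B (bsum A B);
  bpr1 : forall A B, Hom (bsum A B) A;
  bpr2 : forall A B, Hom (bsum A B) B;
  bpr1_in1 : forall A B, comp (bpr1 A B) (bin1 A B) = idm A;
  bpr2_in2 : forall A B, comp (bpr2 A B) (bin2 A B) = idm B;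
  bpr1_in2 : forall A B, comp (bpr1 A B) (bin2 A B) = hzero B A;
  bpr2_in1 : forall A B, comp (bpr2 A B) (bin1 A B) = hzero A B;
  bsum_id : forall A B,
      hadd (comp (bin1 A B) (bpr1 A B)) (comp (bin2 A B) (bpr2 A B))
      = idm (bsum A B)
}.

Arguments Hom {a} _ _.
Arguments idm {a} _.
Arguments comp {a A B C} _ _.
Arguments hzero {a} _ _.
Arguments hadd {a A B} _ _.
Arguments zobj {a}.
Arguments bsum {a} _ _.
Arguments bin1 {a} _ _.
Arguments bin2 {a} _ _.
Arguments bpr1 {a} _ _.
Arguments bpr2 {a} _ _.

Notation "g ∘ f" := (comp g f).

Section Defs.
Variable C : AdditiveCategory.

Definition from_zero (X : C) : Hom zobj X := hzero zobj X.
Definition to_zero (X : C) : Hom X zobj := hzero X zobj.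

Definition is_iso {A B : C} (f : Hom A B) : Prop :=
  exists g : Hom B A, g ∘ f = idm A /\ f ∘ g = idm B.

Definition hsum {A B A' B' : C} (f : Hom A B) (g : Hom A' B')
  : Hom (bsum A A') (bsum B B') :=
  hadd (bin1 B B' ∘ f ∘ bpr1 A A') (bin2 B B' ∘ g ∘ bpr2 A A').

Definition is_kernel_of {A B D : C} (i : Hom A B) (d : Hom B D) : Prop :=
  d ∘ i = hzero A D /\
  forall (X : C) (f : Hom X B), d ∘ f = hzero X D ->
    exists g : Hom X A, i ∘ g = f /\ forall g' : Hom X A, i ∘ g' = f -> g' = g.

Definition is_cokernel_of {A B D : C} (i : Hom A B) (d : Hom B D) : Prop :=
  d ∘ i = hzero A D /\
  forall (X : C) (f : Hom B X), f ∘ i = hzero A X ->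
    exists g : Hom D X, g ∘ d = f /\ forall g' : Hom D X, g' ∘ d = f -> g' = g.

Definition is_kernel {A B : C} (i : Hom A B) : Prop :=
  exists (D : C) (d : Hom B D), is_kernel_of i d.

Definition is_cokernel {B D : C} (d : Hom B D) : Prop :=
  exists (A : C) (i : Hom A B), is_cokernel_of i d.

Definition has_cokernel {A B : C} (a : Hom A B) : Prop :=
  exists (D : C) (d : Hom B D), is_cokernel_of a d.

Definition has_kernel {B D : C} (b : Hom B D) : Prop :=
  exists (A : C) (i : Hom A B), is_kernel_of i b.

Definition kc_pair {A B D : C} (i : Hom A B) (d : Hom B D) : Prop :=
  is_kernel_of i d /\ is_cokernel_of i d.

(** Pushout square:   X --f--> Y
                      |h       |h'
                      X' -f'-> Y'     *)
Definition is_pushout {X Y X' Y' : C} (f : Hom X Y) (h : Hom X X')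
    (f' : Hom X' Y') (h' : Hom Y Y') : Prop :=
  f' ∘ h = h' ∘ f /\
  forall (Z : C) (u : Hom X' Z) (v : Hom Y Z), u ∘ h = v ∘ f ->
    exists w : Hom Y' Z, (w ∘ f' = u /\ w ∘ h' = v) /\
      forall w' : Hom Y' Z, w' ∘ f' = u /\ w' ∘ h' = v -> w' = w.

(** Pullback square:  P --h'--> A
                      |t'       |h
                      B  --t--> D     *)
Definition is_pullback {P A B D : C} (h : Hom A D) (t : Hom B D)
    (h' : Hom P B) (t' : Hom P A) : Prop :=
  h ∘ t' = t ∘ h' /\
  forall (Z : C) (u : Hom Z A) (v : Hom Z B), h ∘ u = t ∘ v ->
    exists w : Hom Z P, (t' ∘ w = u /\ h' ∘ w = v) /\
      forall w' : Hom Z P, t' ∘ w' = u /\ h' ∘ w' = v -> w' = w.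

Definition MorClass := forall A B : C, Hom A B -> Prop.
Definition SeqClass := forall A B D : C, Hom A B -> Hom B D -> Prop.

Definition pushout_stable (P : MorClass) : Prop :=
  forall (X Y X' : C) (f : Hom X Y) (h : Hom X X'), P _ _ f ->
    (exists (Y' : C) (f' : Hom X' Y') (h' : Hom Y Y'), is_pushout f h f' h') /\
    (forall (Y' : C) (f' : Hom X' Y') (h' : Hom Y Y'),
        is_pushout f h f' h' -> P _ _ f').

Definition pullback_stable (P : MorClass) : Prop :=
  forall (A D B : C) (h : Hom A D) (t : Hom B D), P _ _ h ->
    (exists (Q : C) (h' : Hom Q B) (t' : Hom Q A), is_pullback h t h' t') /\
    (forall (Q : C) (h' : Hom Q B) (t' : Hom Q A),
        is_pullback h t h' t' -> P _ _ h').

Definition adm_monic (W : SeqClass) : MorClass :=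
  fun A B i => exists (D : C) (d : Hom B D), W _ _ _ i d.

Definition adm_epic (W : SeqClass) : MorClass :=
  fun B D d => exists (A : C) (i : Hom A B), W _ _ _ i d.

Definition seq_iso_closed (W : SeqClass) : Prop :=
  forall (A B D A' B' D' : C) (i : Hom A B) (d : Hom B D)
         (i' : Hom A' B') (d' : Hom B' D')
         (a : Hom A A') (b : Hom B B') (c : Hom D D'),
    W _ _ _ i d -> is_iso a -> is_iso b -> is_iso c ->
    i' ∘ a = b ∘ i -> d' ∘ b = c ∘ d -> W _ _ _ i' d'.

Definition seq_sum_closed (W : SeqClass) : Prop :=
  forall (A B D A' B' D' : C) (i : Hom A B) (d : Hom B D)
         (i' : Hom A' B') (d' : Hom B' D'),
    W _ _ _ i d -> W _ _ _ i' d' -> W _ _ _ (hsum i i') (hsum d d').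

Definition weakly_exact (W : SeqClass) : Prop :=
  (forall (A B D : C) (i : Hom A B) (d : Hom B D), W _ _ _ i d -> kc_pair i d) /\
  seq_iso_closed W /\
  seq_sum_closed W /\
  (forall A : C, adm_monic W (idm A)) /\
  (forall A : C, adm_epic W (idm A)) /\
  pushout_stable (adm_monic W) /\
  pullback_stable (adm_epic W).

Definition mor_iso_closed (P : MorClass) : Prop :=
  forall (X Y X' Y' : C) (f : Hom X Y) (f' : Hom X' Y')
         (a : Hom X X') (b : Hom Y Y'),
    P _ _ f -> is_iso a -> is_iso b -> f' ∘ a = b ∘ f -> P _ _ f'.

Definition mor_sum_closed (P : MorClass) : Prop :=
  forall (A B A' B' : C) (f : Hom A B) (g : Hom A' B'),
    P _ _ f -> P _ _ g -> P _ _ (hsum f g).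

Definition right_weakly_exact (I : MorClass) : Prop :=
  (forall (A B : C) (f : Hom A B), I _ _ f -> is_kernel f) /\
  mor_iso_closed I /\
  (forall X : C, I _ _ (idm X) /\ I _ _ (from_zero X)) /\
  pushout_stable I /\
  (forall (A B D : C) (a : Hom A B) (b : Hom B D),
               I _ _ (b ∘ a) -> has_cokernel a -> I _ _ a) /\
  mor_sum_closed I.

Definition left_weakly_exact (Dc : MorClass) : Prop :=
  (forall (A B : C) (f : Hom A B), Dc _ _ f -> is_cokernel f) /\
  mor_iso_closed Dc /\
  (forall X : C, Dc _ _ (idm X) /\ Dc _ _ (to_zero X)) /\
  pullback_stable Dc /\
  (forall (A B D : C) (a : Hom A B) (b : Hom B D),
               Dc _ _ (b ∘ a) -> has_kernel b -> Dc _ _ b) /\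
  mor_sum_closed Dc.

End Defs.


(** Two closure facts drive everything: in a pair of [W] the monic may be
    replaced by any other kernel of the epic, and the epic by any other
    cokernel of the monic (both follow from isomorphism closure).  The only
    substantial axiom is (Q): if [b ∘ a] is an admissible monic and [a] has a
    cokernel [c], then [a] is admissible.  Following the paper we push [b ∘ a]
    out along [a], show that the copairing [m, n] of the pushout legs is a
    pullback of an admissible epic, shear [B ⊕ D] to see that [bin1 ∘ a] is an
    admissible monic with cokernel [c ⊕ 1], and pull [c ⊕ 1] back along [bin1]
    to find [c] admissible with kernel [a].  The statement about admissible
    epics is obtained by applying the monic statement in the opposite
    category, which carries the opposite weakly exact structure. *)

Section Preadditive.
Context {C : AdditiveCategory}.

Lemma hadd_0l {A B : C} (f : Hom A B) : hadd (hzero A B) f = f.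
Proof. rewrite hadd_comm; apply hadd_0. Qed.

Lemma hadd_negl {A B : C} (f : Hom A B) : hadd (hneg f) f = hzero A B.
Proof. rewrite hadd_comm; apply hadd_neg. Qed.

Lemma hadd_cancel {A B : C} (x y z : Hom A B) : hadd x y = hadd x z -> y = z.
Proof.
  intro H. rewrite <- (hadd_0l y), <- (hadd_0l z), <- (hadd_negl x),
    <- !hadd_assoc, H. reflexivity.
Qed.

Lemma hneg_unique {A B : C} (x y : Hom A B) : hadd x y = hzero A B -> y = hneg x.
Proof. intro H. apply (hadd_cancel x). rewrite H, hadd_neg. reflexivity. Qed.

Lemma hneg_neg {A B : C} (x : Hom A B) : hneg (hneg x) = x.
Proof. symmetry. apply hneg_unique. apply hadd_negl. Qed.

Lemma hneg_zero {A B : C} : hneg (hzero A B) = hzero A B.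
Proof. symmetry. apply hneg_unique. apply hadd_0. Qed.

Lemma hsub_eq {A B : C} (x y : Hom A B) : hadd x (hneg y) = hzero A B -> x = y.
Proof.
  intro H. apply hneg_unique in H.
  rewrite <- (hneg_neg x), <- H, hneg_neg. reflexivity.
Qed.

Lemma comp_zero_l {A B D : C} (f : Hom A B) : hzero B D ∘ f = hzero A D.
Proof.
  apply (hadd_cancel (hzero B D ∘ f)).
  rewrite hadd_0, <- comp_add_l, hadd_0. reflexivity.
Qed.

Lemma comp_zero_r {A B D : C} (f : Hom B D) : f ∘ hzero A B = hzero A D.
Proof.
  apply (hadd_cancel (f ∘ hzero A B)).
  rewrite hadd_0, <- comp_add_r, hadd_0. reflexivity.
Qed.

Lemma comp_neg_l {A B D : C} (g : Hom B D) (f : Hom A B) : hneg g ∘ f = hneg (g ∘ f).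
Proof. apply hneg_unique. rewrite <- comp_add_l, hadd_neg. apply comp_zero_l. Qed.

Lemma comp_neg_r {A B D : C} (g : Hom B D) (f : Hom A B) : g ∘ hneg f = hneg (g ∘ f).
Proof. apply hneg_unique. rewrite <- comp_add_r, hadd_neg. apply comp_zero_r. Qed.

Lemma iso_id {A : C} : is_iso (idm A).
Proof. exists (idm A). rewrite comp_id_l. split; reflexivity. Qed.

Definition tup {X A B : C} (f : Hom X A) (g : Hom X B) : Hom X (bsum A B) :=
  hadd (bin1 A B ∘ f) (bin2 A B ∘ g).

Definition cotup {A B X : C} (f : Hom A X) (g : Hom B X) : Hom (bsum A B) X :=
  hadd (f ∘ bpr1 A B) (g ∘ bpr2 A B).

Lemma pr1_tup {X A B : C} (f : Hom X A) (g : Hom X B) : bpr1 A B ∘ tup f g = f.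
Proof.
  unfold tup. rewrite comp_add_r, !comp_assoc, bpr1_in1, bpr1_in2, comp_id_l,
    comp_zero_l. apply hadd_0.
Qed.

Lemma pr2_tup {X A B : C} (f : Hom X A) (g : Hom X B) : bpr2 A B ∘ tup f g = g.
Proof.
  unfold tup. rewrite comp_add_r, !comp_assoc, bpr2_in2, bpr2_in1, comp_id_l,
    comp_zero_l. apply hadd_0l.
Qed.

Lemma cotup_in1 {A B X : C} (f : Hom A X) (g : Hom B X) : cotup f g ∘ bin1 A B = f.
Proof.
  unfold cotup. rewrite comp_add_l, <- !comp_assoc, bpr1_in1, bpr2_in1, comp_id_r,
    comp_zero_r. apply hadd_0.
Qed.

Lemma cotup_in2 {A B X : C} (f : Hom A X) (g : Hom B X) : cotup f g ∘ bin2 A B = g.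
Proof.
  unfold cotup. rewrite comp_add_l, <- !comp_assoc, bpr2_in2, bpr1_in2, comp_id_r,
    comp_zero_r. apply hadd_0l.
Qed.

Lemma tup_eta {X A B : C} (f : Hom X (bsum A B)) :
  f = tup (bpr1 A B ∘ f) (bpr2 A B ∘ f).
Proof. unfold tup. rewrite !comp_assoc, <- comp_add_l, bsum_id, comp_id_l. reflexivity. Qed.

Lemma cotup_eta {A B X : C} (f : Hom (bsum A B) X) :
  f = cotup (f ∘ bin1 A B) (f ∘ bin2 A B).
Proof.
  unfold cotup. rewrite <- !comp_assoc, <- comp_add_r, bsum_id, comp_id_r. reflexivity.
Qed.

Lemma bsum_ext {X A B : C} (f g : Hom X (bsum A B)) :
  bpr1 A B ∘ f = bpr1 A B ∘ g -> bpr2 A B ∘ f = bpr2 A B ∘ g -> f = g.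
Proof. intros H1 H2. rewrite (tup_eta f), (tup_eta g), H1, H2. reflexivity. Qed.

Lemma bsum_ext_l {A B X : C} (f g : Hom (bsum A B) X) :
  f ∘ bin1 A B = g ∘ bin1 A B -> f ∘ bin2 A B = g ∘ bin2 A B -> f = g.
Proof. intros H1 H2. rewrite (cotup_eta f), (cotup_eta g), H1, H2. reflexivity. Qed.

Lemma bin1_mono {X A B : C} (x y : Hom X A) : bin1 A B ∘ x = bin1 A B ∘ y -> x = y.
Proof.
  intro H. apply (f_equal (fun h => bpr1 A B ∘ h)) in H.
  rewrite !comp_assoc, bpr1_in1, !comp_id_l in H. exact H.
Qed.

Lemma cotup_tup {X A B Y : C} (f : Hom A Y) (g : Hom B Y) (u : Hom X A) (v : Hom X B) :
  cotup f g ∘ tup u v = hadd (f ∘ u) (g ∘ v).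
Proof. unfold cotup. rewrite comp_add_l, <- !comp_assoc, pr1_tup, pr2_tup. reflexivity. Qed.

Lemma tup_comp {X Y A B : C} (f : Hom Y A) (g : Hom Y B) (h : Hom X Y) :
  tup f g ∘ h = tup (f ∘ h) (g ∘ h).
Proof.
  apply bsum_ext; rewrite comp_assoc; [rewrite !pr1_tup | rewrite !pr2_tup]; reflexivity.
Qed.

Lemma comp_cotup {A B X Y : C} (f : Hom A X) (g : Hom B X) (h : Hom X Y) :
  h ∘ cotup f g = cotup (h ∘ f) (h ∘ g).
Proof.
  apply bsum_ext_l; rewrite <- comp_assoc;
    [rewrite !cotup_in1 | rewrite !cotup_in2]; reflexivity.
Qed.

Lemma in1_tup {X A B : C} (f : Hom X A) : bin1 A B ∘ f = tup f (hzero X B).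
Proof.
  apply bsum_ext; rewrite ?pr1_tup, ?pr2_tup, comp_assoc;
    [rewrite bpr1_in1, comp_id_l | rewrite bpr2_in1, comp_zero_l]; reflexivity.
Qed.

Lemma in2_tup {X A B : C} (g : Hom X B) : bin2 A B ∘ g = tup (hzero X A) g.
Proof.
  apply bsum_ext; rewrite ?pr1_tup, ?pr2_tup, comp_assoc;
    [rewrite bpr1_in2, comp_zero_l | rewrite bpr2_in2, comp_id_l]; reflexivity.
Qed.

Lemma hsum_tup {A B A' B' : C} (f : Hom A B) (g : Hom A' B') :
  hsum f g = tup (f ∘ bpr1 A A') (g ∘ bpr2 A A').
Proof. unfold hsum, tup. rewrite !comp_assoc. reflexivity. Qed.

Lemma pr1_hsum {A B A' B' : C} (f : Hom A B) (g : Hom A' B') :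
  bpr1 B B' ∘ hsum f g = f ∘ bpr1 A A'.
Proof. rewrite hsum_tup. apply pr1_tup. Qed.

Lemma pr2_hsum {A B A' B' : C} (f : Hom A B) (g : Hom A' B') :
  bpr2 B B' ∘ hsum f g = g ∘ bpr2 A A'.
Proof. rewrite hsum_tup. apply pr2_tup. Qed.

Lemma hsum_in1 {A B A' B' : C} (f : Hom A B) (g : Hom A' B') :
  hsum f g ∘ bin1 A A' = bin1 B B' ∘ f.
Proof.
  rewrite hsum_tup, tup_comp, <- !comp_assoc, bpr1_in1, bpr2_in1, comp_id_r,
    comp_zero_r, in1_tup. reflexivity.
Qed.

Lemma hsum_in2 {A B A' B' : C} (f : Hom A B) (g : Hom A' B') :
  hsum f g ∘ bin2 A A' = bin2 B B' ∘ g.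
Proof.
  rewrite hsum_tup, tup_comp, <- !comp_assoc, bpr1_in2, bpr2_in2, comp_id_r,
    comp_zero_r, in2_tup. reflexivity.
Qed.

Definition shear {B D : C} (b : Hom B D) : Hom (bsum B D) (bsum B D) :=
  tup (bpr1 B D) (hadd (b ∘ bpr1 B D) (bpr2 B D)).

Lemma shear_tup {X B D : C} (b : Hom B D) (u : Hom X B) (v : Hom X D) :
  shear b ∘ tup u v = tup u (hadd (b ∘ u) v).
Proof.
  unfold shear. rewrite tup_comp, comp_add_l, <- comp_assoc, pr1_tup, pr2_tup.
  reflexivity.
Qed.

Lemma shear_comp {B D : C} (b c : Hom B D) : shear c ∘ shear b = shear (hadd c b).
Proof. unfold shear at 2. rewrite shear_tup, hadd_assoc, <- comp_add_l. reflexivity. Qed.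

Lemma shear_zero {B D : C} : shear (hzero B D) = idm (bsum B D).
Proof.
  unfold shear. rewrite comp_zero_l, hadd_0l, (tup_eta (idm _)), !comp_id_r.
  reflexivity.
Qed.

Lemma shear_iso {B D : C} (b : Hom B D) :
  shear (hneg b) ∘ shear b = idm _ /\ shear b ∘ shear (hneg b) = idm _.
Proof. rewrite !shear_comp, hadd_negl, hadd_neg, shear_zero. split; reflexivity. Qed.

Lemma kernel_monic {A B D X : C} {i : Hom A B} {d : Hom B D} (x y : Hom X A) :
  is_kernel_of i d -> i ∘ x = i ∘ y -> x = y.
Proof.
  intros [H0 Hk] E.
  destruct (Hk X (i ∘ x)) as [g [_ Hu]].
  { rewrite comp_assoc, H0. apply comp_zero_l. }
  rewrite (Hu x eq_refl), (Hu y (eq_sym E)). reflexivity.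
Qed.

Lemma cokernel_epic {A B D X : C} {i : Hom A B} {d : Hom B D} (x y : Hom D X) :
  is_cokernel_of i d -> x ∘ d = y ∘ d -> x = y.
Proof.
  intros [H0 Hk] E.
  destruct (Hk X (x ∘ d)) as [g [_ Hu]].
  { rewrite <- comp_assoc, H0. apply comp_zero_r. }
  rewrite (Hu x eq_refl), (Hu y (eq_sym E)). reflexivity.
Qed.

Lemma from_zero_kernel (X : C) : is_kernel_of (from_zero X) (idm X).
Proof.
  split.
  - rewrite comp_id_l. reflexivity.
  - intros Y f Hf. exists (hzero Y zobj). split.
    + rewrite comp_id_l in Hf. unfold from_zero. rewrite comp_zero_r, Hf. reflexivity.
    + intros g' _. rewrite <- (comp_id_l g'), zobj_id. apply comp_zero_l.
Qed.

Lemma pushout_cokernel {X Y X' Y' E : C} {f : Hom X Y} {h : Hom X X'}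
    {f' : Hom X' Y'} {h' : Hom Y Y'} {e : Hom Y E} :
  is_pushout f h f' h' -> is_cokernel_of f e ->
  exists q : Hom Y' E, is_cokernel_of f' q /\ q ∘ h' = e.
Proof.
  intros [Hsq Hpo] [Ce0 Ceu].
  destruct (Hpo E (hzero X' E) e) as [q [[Hqf' Hqh'] _]].
  { rewrite comp_zero_l. symmetry. exact Ce0. }
  exists q. split; [|exact Hqh']. split; [exact Hqf'|].
  intros Z g Hg.
  assert (Hgh : (g ∘ h') ∘ f = hzero X Z).
  { rewrite <- comp_assoc, <- Hsq, comp_assoc, Hg. apply comp_zero_l. }
  destruct (Ceu Z (g ∘ h') Hgh) as [k [Hk Hku]].
  exists k. split.
  - destruct (Hpo Z (hzero X' Z) (g ∘ h')) as [w [_ Hw]].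
    { rewrite comp_zero_l. symmetry. exact Hgh. }
    transitivity w; [|symmetry]; apply Hw; split.
    + rewrite <- comp_assoc, Hqf'. apply comp_zero_r.
    + rewrite <- comp_assoc, Hqh'. exact Hk.
    + exact Hg.
    + reflexivity.
  - intros k' Hk'. apply Hku. rewrite <- Hk', <- comp_assoc, Hqh'. reflexivity.
Qed.

Lemma cotup_pullback {B D P E : C} (m : Hom B P) (n : Hom D P) (q : Hom P E) :
  is_kernel_of m q -> is_pullback (q ∘ n) q (cotup m n) (bpr2 B D).
Proof.
  intros [Km0 Kmu]. split.
  - rewrite comp_cotup, Km0. unfold cotup. rewrite comp_zero_l, hadd_0l. reflexivity.
  - intros Z u v Huv.
    destruct (Kmu Z (hadd v (hneg (n ∘ u)))) as [y [Hy Hyu]].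
    { rewrite comp_add_r, comp_neg_r, (comp_assoc q n u), <- Huv. apply hadd_neg. }
    exists (tup y u). split; [split|].
    + apply pr2_tup.
    + rewrite cotup_tup, Hy, <- hadd_assoc, hadd_negl. apply hadd_0.
    + intros w' [H2 H1]. apply bsum_ext; rewrite ?pr1_tup, ?pr2_tup; [|exact H2].
      apply Hyu. rewrite (tup_eta w'), cotup_tup, H2 in H1.
      rewrite <- H1, <- hadd_assoc, hadd_neg, hadd_0. reflexivity.
Qed.

Lemma cotup_kernel {A B D P E : C} (a : Hom A B) (x : Hom A D)
    (m : Hom B P) (n : Hom D P) (q : Hom P E) :
  m ∘ a = n ∘ x -> is_kernel_of m q -> is_kernel_of x (q ∘ n) ->
  is_kernel_of (tup a (hneg x)) (cotup m n).
Proof.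
  intros Hsq Km Kx. pose proof Kx as [Kx0 Kxu]. split.
  - rewrite cotup_tup, comp_neg_r, Hsq. apply hadd_neg.
  - intros X f Hf.
    assert (Hf2 : (q ∘ n) ∘ (bpr2 B D ∘ f) = hzero X E).
    { rewrite comp_assoc, (proj1 (cotup_pullback m n q Km)), <- comp_assoc, Hf.
      apply comp_zero_r. }
    destruct (Kxu X (hneg (bpr2 B D ∘ f))) as [g [Hg Hgu]].
    { rewrite comp_neg_r, Hf2. apply hneg_zero. }
    assert (Hx : hneg x ∘ g = bpr2 B D ∘ f) by (rewrite comp_neg_l, Hg; apply hneg_neg).
    exists g. split.
    + apply bsum_ext; rewrite comp_assoc, ?pr1_tup, ?pr2_tup; [|exact Hx].
      rewrite (tup_eta f), cotup_tup, <- Hx, comp_neg_l, comp_neg_r,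
        (comp_assoc n x g), <- Hsq, <- comp_assoc in Hf.
      apply hsub_eq in Hf. symmetry. exact (kernel_monic _ _ Km Hf).
    + intros g' Hg'. apply (kernel_monic _ _ Kx).
      apply (f_equal (fun h => bpr2 B D ∘ h)) in Hg'.
      rewrite comp_assoc, pr2_tup, <- Hx, !comp_neg_l in Hg'.
      rewrite <- (hneg_neg (x ∘ g')), Hg'. apply hneg_neg.
Qed.

Lemma cokernel_extend {A B Q : C} (D : C) {a : Hom A B} {c : Hom B Q} :
  is_cokernel_of a c -> is_cokernel_of (bin1 B D ∘ a) (hsum c (idm D)).
Proof.
  intros [Cc0 Ccu]. split.
  - rewrite comp_assoc, hsum_in1, <- comp_assoc, Cc0. apply comp_zero_r.
  - intros X f Hf.
    destruct (Ccu X (f ∘ bin1 B D)) as [g [Hg Hgu]]; [rewrite <- comp_assoc; exact Hf|].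
    exists (cotup g (f ∘ bin2 B D)). split.
    + apply bsum_ext_l; rewrite <- comp_assoc.
      * rewrite hsum_in1, comp_assoc, cotup_in1. exact Hg.
      * rewrite hsum_in2, comp_id_r, cotup_in2. reflexivity.
    + intros G HG. apply bsum_ext_l.
      * rewrite cotup_in1. apply Hgu. rewrite <- HG, <- !comp_assoc, hsum_in1. reflexivity.
      * rewrite cotup_in2, <- HG, <- comp_assoc, hsum_in2, comp_id_r. reflexivity.
Qed.

Lemma hsum_id_pullback {B Q : C} (D : C) (c : Hom B Q) :
  is_pullback (hsum c (idm D)) (bin1 Q D) c (bin1 B D).
Proof.
  split; [apply hsum_in1|].
  intros Z u v Huv.
  assert (H1 := f_equal (fun h => bpr1 Q D ∘ h) Huv).
  assert (H2 := f_equal (fun h => bpr2 Q D ∘ h) Huv). simpl in H1, H2.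
  rewrite !comp_assoc, pr1_hsum, bpr1_in1, comp_id_l, <- comp_assoc in H1.
  rewrite !comp_assoc, pr2_hsum, bpr2_in1, comp_id_l, comp_zero_l in H2.
  exists (bpr1 B D ∘ u). split; [split|].
  - apply bsum_ext; rewrite comp_assoc.
    + rewrite bpr1_in1, comp_id_l. reflexivity.
    + rewrite bpr2_in1, comp_zero_l, H2. reflexivity.
  - exact H1.
  - intros w' [Hw1 _]. rewrite <- Hw1, comp_assoc, bpr1_in1, comp_id_l. reflexivity.
Qed.

Lemma kernel_of_hsum_id {A B Q : C} (D : C) (a : Hom A B) (c : Hom B Q) :
  is_kernel_of (bin1 B D ∘ a) (hsum c (idm D)) -> is_kernel_of a c.
Proof.
  intros [K0 Ku]. split.
  - apply (f_equal (fun h => bpr1 Q D ∘ h)) in K0.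
    rewrite comp_assoc, pr1_hsum, <- comp_assoc, (comp_assoc (bpr1 B D)), bpr1_in1,
      comp_id_l, comp_zero_r in K0. exact K0.
  - intros X f Hf.
    destruct (Ku X (bin1 B D ∘ f)) as [g [Hg Hgu]].
    { rewrite comp_assoc, hsum_in1, <- comp_assoc, Hf. apply comp_zero_r. }
    exists g. split.
    + apply (bin1_mono (B := D)). rewrite comp_assoc. exact Hg.
    + intros g' Hg'. apply Hgu. rewrite <- comp_assoc, Hg'. reflexivity.
Qed.

End Preadditive.

Section WeaklyExact.
Variable C : AdditiveCategory.
Variable W : SeqClass C.
Hypothesis HW : weakly_exact W.

Lemma W_kc {A B D : C} {i : Hom A B} {d : Hom B D} : W _ _ _ i d -> kc_pair i d.
Proof. destruct HW as [Hkc _]. apply Hkc. Qed.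

Lemma W_of_kernel {A A' B D : C} {k : Hom A B} {i : Hom A' B} {d : Hom B D} :
  W _ _ _ k d -> is_kernel_of i d -> W _ _ _ i d.
Proof.
  intros Wk Ki. destruct (W_kc Wk) as [Kk _]. destruct HW as [_ [Hiso _]].
  destruct (proj2 Ki _ k (proj1 Kk)) as [psi [Hpsi _]].
  destruct (proj2 Kk _ i (proj1 Ki)) as [phi [Hphi _]].
  apply (Hiso _ _ _ _ _ _ k d i d psi (idm B) (idm D) Wk); try apply iso_id.
  - exists phi. split.
    + apply (kernel_monic _ _ Kk). rewrite comp_assoc, Hphi, Hpsi, comp_id_r. reflexivity.
    + apply (kernel_monic _ _ Ki). rewrite comp_assoc, Hpsi, Hphi, comp_id_r. reflexivity.
  - rewrite Hpsi, comp_id_l. reflexivity.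
  - rewrite comp_id_l, comp_id_r. reflexivity.
Qed.

Lemma W_of_cokernel {A B D D' : C} {i : Hom A B} {e : Hom B D} {d : Hom B D'} :
  W _ _ _ i e -> is_cokernel_of i d -> W _ _ _ i d.
Proof.
  intros We Cd. destruct (W_kc We) as [_ Ce]. destruct HW as [_ [Hiso _]].
  destruct (proj2 Ce _ d (proj1 Cd)) as [psi [Hpsi _]].
  destruct (proj2 Cd _ e (proj1 Ce)) as [phi [Hphi _]].
  apply (Hiso _ _ _ _ _ _ i e i d (idm A) (idm B) psi We); try apply iso_id.
  - exists phi. split.
    + apply (cokernel_epic _ _ Ce). rewrite <- comp_assoc, Hpsi, Hphi, comp_id_l. reflexivity.
    + apply (cokernel_epic _ _ Cd). rewrite <- comp_assoc, Hphi, Hpsi, comp_id_l. reflexivity.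
  - rewrite comp_id_l, comp_id_r. reflexivity.
  - rewrite Hpsi, comp_id_r. reflexivity.
Qed.

Lemma W_middle_iso {A B D : C} {i : Hom A B} {d : Hom B D} (phi phi' : Hom B B) :
  W _ _ _ i d -> phi' ∘ phi = idm B -> phi ∘ phi' = idm B ->
  W _ _ _ (phi ∘ i) (d ∘ phi').
Proof.
  intros Wid H1 H2. destruct HW as [_ [Hiso _]].
  apply (Hiso _ _ _ _ _ _ i d _ _ (idm A) phi (idm D) Wid); try apply iso_id.
  - exists phi'. split; assumption.
  - apply comp_id_r.
  - rewrite <- comp_assoc, H1, comp_id_r, comp_id_l. reflexivity.
Qed.

Lemma adm_monic_left_factor {A B D : C} (a : Hom A B) (b : Hom B D) :
  adm_monic W (b ∘ a) -> has_cokernel a -> adm_monic W a.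
Proof.
  intros [E [e We]] [Q [c Cc]].
  pose proof HW as [_ [_ [_ [_ [_ [E2 E2op]]]]]].
  destruct (W_kc We) as [Kx Cx].
  (* the pushout of [b ∘ a] along [a]: [m ∘ a = n ∘ (b ∘ a)], [m] admissible *)
  destruct (E2 _ _ _ (b ∘ a) a (ex_intro _ E (ex_intro _ e We)))
    as [[P [m [n Po]]] Hpo].
  destruct (pushout_cokernel Po Cx) as [q [Cq Hqn]].
  destruct (Hpo _ _ _ Po) as [E' [q' Wq']].
  destruct (W_kc (W_of_cokernel Wq' Cq)) as [Km _].
  (* [m, n] is a pullback of the admissible epic [e], with kernel [(a, -b∘a)] *)
  assert (Pb : is_pullback e q (cotup m n) (bpr2 B D))
    by (rewrite <- Hqn; apply cotup_pullback; exact Km).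
  destruct (E2op _ _ _ e q (ex_intro _ A (ex_intro _ _ We))) as [_ Hpb].
  destruct (Hpb _ _ _ Pb) as [K [k Wk]].
  assert (Wmn : W _ _ _ (tup a (hneg (b ∘ a))) (cotup m n)).
  { apply (W_of_kernel Wk). apply cotup_kernel with (q := q);
      [exact (proj1 Po) | exact Km | rewrite Hqn; exact Kx]. }
  (* shearing by [b] turns [(a, -b∘a)] into [bin1 ∘ a], whose cokernel is [c ⊕ 1] *)
  destruct (shear_iso b) as [Hinv1 Hinv2].
  pose proof (W_middle_iso _ _ Wmn Hinv1 Hinv2) as Wa.
  rewrite shear_tup, hadd_neg, <- in1_tup in Wa.
  pose proof (W_of_cokernel Wa (cokernel_extend D Cc)) as Wc.
  (* [c] is the pullback of [c ⊕ 1] along [bin1], and [a] is its kernel *)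
  destruct (E2op _ _ _ (hsum c (idm D)) (bin1 Q D) (ex_intro _ _ (ex_intro _ _ Wc)))
    as [_ Hpb2].
  destruct (Hpb2 _ _ _ (hsum_id_pullback D c)) as [K' [k' Wk']].
  exists Q, c. apply (W_of_kernel Wk'). apply (kernel_of_hsum_id D).
  exact (proj1 (W_kc Wc)).
Qed.

Lemma adm_monic_right_weakly_exact : right_weakly_exact (adm_monic W).
Proof.
  pose proof HW as [Hkc [Hiso [Hsum [E0 [E0op [E2 _]]]]]].
  split; [|split; [|split; [|split; [|split]]]].
  - intros A B f [D [d Wd]]. exists D, d. exact (proj1 (Hkc _ _ _ _ _ Wd)).
  - intros X Y X' Y' f f' a b [D [d Wd]] Ha [b' [Hb1 Hb2]] Heq.
    exists D, (d ∘ b').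
    apply (Hiso _ _ _ _ _ _ f d f' (d ∘ b') a b (idm D) Wd Ha
             (ex_intro _ b' (conj Hb1 Hb2)) iso_id Heq).
    rewrite <- comp_assoc, Hb1, comp_id_r, comp_id_l. reflexivity.
  - intro X. split; [apply E0|].
    destruct (E0op X) as [A [i Wi]].
    exists X, (idm X). exact (W_of_kernel Wi (from_zero_kernel X)).
  - exact E2.
  - exact (@adm_monic_left_factor).
  - intros A B A' B' f g [D [d Wd]] [D' [d' Wd']].
    exists (bsum D D'), (hsum d d'). apply Hsum; assumption.
Qed.

Lemma W_characterization {A B D : C} (i : Hom A B) (d : Hom B D) :
  W _ _ _ i d <-> (kc_pair i d /\ adm_monic W i /\ adm_epic W d).
Proof.
  split.
  - intro Wd. split; [exact (W_kc Wd)|]. split; [exists D, d | exists A, i]; exact Wd.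
  - intros [[_ Cd] [[D' [e We]] _]]. exact (W_of_cokernel We Cd).
Qed.

End WeaklyExact.

Section Duality.
Variable C : AdditiveCategory.

Definition Cop : AdditiveCategory :=
  {| Obj := Obj C;
     Hom := fun A B => @Hom C B A;
     idm := @idm C;
     comp := fun A B D g f => @comp C D B A f g;
     comp_assoc := fun A B D E h g f => eq_sym (@comp_assoc C E D B A f g h);
     comp_id_l := fun A B f => @comp_id_r C B A f;
     comp_id_r := fun A B f => @comp_id_l C B A f;
     hadd := fun A B => @hadd C B A;
     hzero := fun A B => @hzero C B A;
     hneg := fun A B => @hneg C B A;
     hadd_assoc := fun A B => @hadd_assoc C B A;
     hadd_comm := fun A B => @hadd_comm C B A;
     hadd_0 := fun A B => @hadd_0 C B A;
     hadd_neg := fun A B => @hadd_neg C B A;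
     comp_add_l := fun A B D g g' f => @comp_add_r C D B A f g g';
     comp_add_r := fun A B D g f f' => @comp_add_l C D B A f f' g;
     zobj := @zobj C;
     zobj_id := @zobj_id C;
     bsum := @bsum C;
     bin1 := @bpr1 C;
     bin2 := @bpr2 C;
     bpr1 := @bin1 C;
     bpr2 := @bin2 C;
     bpr1_in1 := @bpr1_in1 C;
     bpr2_in2 := @bpr2_in2 C;
     bpr1_in2 := @bpr2_in1 C;
     bpr2_in1 := @bpr1_in2 C;
     bsum_id := @bsum_id C |}.

Lemma hsum_op {A B A' B' : C} (f : @Hom C A B) (g : @Hom C A' B') :
  @hsum Cop B A B' A' f g = @hsum C A B A' B' f g.
Proof. unfold hsum. simpl. rewrite !comp_assoc. reflexivity. Qed.

Lemma square_inverse {X Y X' Y' : C} (f : Hom X Y) (f' : Hom X' Y')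
    (a : Hom X X') (b : Hom Y Y') (a' : Hom X' X) (b' : Hom Y' Y) :
  f' ∘ a = b ∘ f -> a ∘ a' = idm X' -> b' ∘ b = idm Y -> b' ∘ f' = f ∘ a'.
Proof.
  intros H Ha Hb.
  rewrite <- (comp_id_r (b' ∘ f')), <- Ha, !comp_assoc, <- (comp_assoc b' f' a), H,
    comp_assoc, Hb, comp_id_l. reflexivity.
Qed.

Lemma pullback_transpose {P A B D : C} (h : Hom A D) (t : Hom B D)
    (h' : Hom P B) (t' : Hom P A) :
  is_pullback h t h' t' -> is_pullback t h t' h'.
Proof.
  intros [H1 H2]. split; [symmetry; exact H1|].
  intros Z u v Huv. destruct (H2 Z v u (eq_sym Huv)) as [w [[Hw1 Hw2] Hu]].
  exists w. split; [split; assumption|]. intros w' [E1 E2]. apply Hu. split; assumption.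
Qed.

Lemma pushout_transpose {X Y X' Y' : C} (f : Hom X Y) (h : Hom X X')
    (f' : Hom X' Y') (h' : Hom Y Y') :
  is_pushout f h f' h' -> is_pushout h f h' f'.
Proof.
  intros [H1 H2]. split; [symmetry; exact H1|].
  intros Z u v Huv. destruct (H2 Z v u (eq_sym Huv)) as [w [[Hw1 Hw2] Hu]].
  exists w. split; [split; assumption|]. intros w' [E1 E2]. apply Hu. split; assumption.
Qed.

Variable W : SeqClass C.

Definition Wop : SeqClass Cop := fun A B D i d => W D B A d i.

Lemma weakly_exact_op : weakly_exact W -> weakly_exact Wop.
Proof.
  intros [Hkc [Hiso [Hsum [E0 [E0op [E2 E2op]]]]]].
  split; [|split; [|split; [|split; [|split; [|split]]]]].
  - intros A B D i d Hw. destruct (Hkc _ _ _ d i Hw) as [K Co]. split; [exact Co | exact K].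
  - intros A B D A' B' D' i d i' d' a b c Hw [a' [Ha1 Ha2]] [b' [Hb1 Hb2]]
      [c' [Hc1 Hc2]] E1 E2'.
    simpl in *. unfold Wop in *.
    apply (Hiso _ _ _ _ _ _ d i d' i' c' b' a' Hw).
    + exists c. split; assumption.
    + exists b. split; assumption.
    + exists a. split; assumption.
    + symmetry. apply (square_inverse d' d c b c' b'); [symmetry; exact E2' | exact Hc1 | exact Hb2].
    + symmetry. apply (square_inverse i' i b a b' a'); [symmetry; exact E1 | exact Hb1 | exact Ha2].
  - intros A B D A' B' D' i d i' d' H1 H2. unfold Wop in *.
    rewrite !hsum_op. apply Hsum; assumption.
  - exact E0op.
  - exact E0.
  - intros X Y X' f h Hf.
    destruct (E2op _ _ _ f h Hf) as [[Q [h' [t' Pb]]] Hst]. split.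
    + exists Q, h', t'. apply pullback_transpose; exact Pb.
    + intros Y' f' h2 Po. apply (Hst _ f' h2). apply pullback_transpose. exact Po.
  - intros A D B h t Hh.
    destruct (E2 _ _ _ h t Hh) as [[Y' [f' [h' Po]]] Hst]. split.
    + exists Y', f', h'. apply pushout_transpose; exact Po.
    + intros Q h0 t0 Pb. apply (Hst _ h0 t0). apply pushout_transpose. exact Pb.
Qed.

Lemma left_weakly_exact_of_op : weakly_exact W ->
  right_weakly_exact (adm_monic Wop) -> left_weakly_exact (adm_epic W).
Proof.
  intros [_ [_ [_ [_ [E0op [_ E2op]]]]]] [R1 [R2 [R3 [_ [R5 R6]]]]].
  split; [|split; [|split; [|split; [|split]]]].
  - intros A B f H. exact (R1 B A f H).
  - intros X Y X' Y' f f' a b Hf [a' [Ha1 Ha2]] [b' [Hb1 Hb2]] E.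
    apply (R2 Y X Y' X' f f' b' a' Hf).
    + exists b. split; assumption.
    + exists a. split; assumption.
    + simpl. apply (square_inverse f f' a b a' b' E Ha2 Hb1).
  - intro X. split; [exact (E0op X) | exact (proj2 (R3 X))].
  - exact E2op.
  - intros A B D a b H1 H2. exact (R5 D B A b a H1 H2).
  - intros A B A' B' f g H1 H2. pose proof (R6 B A B' A' f g H1 H2) as H.
    rewrite hsum_op in H. exact H.
Qed.

End Duality.

Theorem mainTheorem6 (C : AdditiveCategory) (W : SeqClass C) :
  weakly_exact W ->
  right_weakly_exact (adm_monic W) /\
  left_weakly_exact (adm_epic W) /\
  (forall (A B D : C) (i : Hom A B) (d : Hom B D),
      W A B D i d <-> (kc_pair i d /\ adm_monic W i /\ adm_epic W d)).
Proof.
  intro HW. split; [|split].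
  - exact (adm_monic_right_weakly_exact C W HW).
  - apply (left_weakly_exact_of_op C W HW).
    exact (adm_monic_right_weakly_exact (Cop C) (Wop C W) (weakly_exact_op C W HW)).
  - intros A B D i d. exact (W_characterization C W HW i d).
Qed.
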